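(* Let $c>0$ and let $r\geq 1$ be an integer. If $N\geq 1$ and $r-1\leq c\log N$, then $$ \sum_{a\leq N}\tau_r(a)\leq \frac{(1+c)^{r-1}}{(r-1)!}\,N(\log N)^{r-1}. $$
   Context: $a$ runs over positive integers. For an integer $r\geq1$, $\tau_r(a)$ is the number of ways to write $a$ as an ordered product of $r$ positive integers. *)

From mathcomp Require Import all_boot.

Set Implicit Arguments.
Unset Strict Implicit.
Unset Printing Implicit Defensive.

(* tau r a = number of ordered r-tuples (a_1,...,a_r) of positive integers
   with a_1 * ... * a_r = a.  For a >= 1 every such a_i lies in [1, a], so we
   count functions 'I_r -> {0,...,a} whose product is a (a zero entry is
   impossible since the product is a >= 1). *)
Definition tau (r a : nat) : nat :=
  #|[set f : {ffun 'I_r -> 'I_a.+1} | \prod_(i < r) (f i : nat) == a]|.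

Definition sum_tau (r N : nat) : nat := \sum_(1 <= a < N.+1) tau r a.

From Stdlib Require Import Reals Factorial Lra Lia.
From mathcomp Require all_boot zify.
Open Scope R_scope.

(* Let S_r(M) be the number of r-tuples of positive integers with product at
   most M.  Splitting off the first entry gives S_{k+2}(M) = sum_{x <= M}
   S_{k+1}(M / x), and one proves S_{k+1}(M) <= M (ln M + k)^k / k! by
   induction on k: the term x = 1 is kept, and for x >= 2 the bound at M / x
   is at most the integral over [x - 1, x] of the decreasing function
   t |-> M (ln M - ln t + k)^k / (t k!), whose primitive is
   -M (ln M - ln t + k)^(k+1) / (k+1)!.  The boundary terms recombine through
   u^(k+1) + (k+1) u^k <= (u+1)^(k+1).  Finally k <= c ln N turns ln N + k
   into at most (1 + c) ln N. *)

Lemma ln_le_compat x y : 0 < x -> x <= y -> ln x <= ln y.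
Proof.
intros Hx Hxy; destruct (Rle_lt_or_eq_dec _ _ Hxy) as [Hlt | ->].
- left; now apply ln_increasing.
- apply Rle_refl.
Qed.

Lemma pow_sub_pow_ge m u v : 0 <= u <= v ->
  INR (S m) * u ^ m * (v - u) <= v ^ S m - u ^ S m.
Proof.
intros [Hu Huv]; induction m as [|m IH].
- simpl; lra.
- assert (Hum : 0 <= u ^ m) by now apply pow_le.
  assert (Hm : 0 <= INR (S m)) by apply pos_INR.
  assert (u * (INR (S m) * u ^ m * (v - u)) <= v * (v ^ S m - u ^ S m)).
  { apply Rmult_le_compat; try lra.
    apply Rmult_le_pos; [now apply Rmult_le_pos | lra]. }
  rewrite S_INR; simpl in *; nra.
Qed.

Lemma pow_add1_ge m u : 0 <= u -> u ^ S m + INR (S m) * u ^ m <= (u + 1) ^ S m.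
Proof.
intros Hu; induction m as [|m IH].
- simpl; lra.
- assert (Hum : 0 <= u ^ m) by now apply pow_le.
  assert (Hm : 0 <= INR (S m)) by apply pos_INR.
  assert ((u + 1) * (u ^ S m + INR (S m) * u ^ m) <= (u + 1) * (u + 1) ^ S m)
    by (apply Rmult_le_compat_l; lra).
  rewrite S_INR; simpl in *; nra.
Qed.

Definition tuple_bound (k : nat) (y : R) : R := y * (ln y + INR k) ^ k / INR (fact k).

(* A primitive of t |-> - tuple_bound k (M / t). *)
Definition tuple_bound_antider (k : nat) (M t : R) : R :=
  M * (ln M - ln t + INR k) ^ S k / INR (fact (S k)).

Lemma tuple_bound_le k y z : 1 <= y -> y <= z -> tuple_bound k y <= tuple_bound k z.
Proof.
intros Hy Hyz; unfold tuple_bound, Rdiv.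
apply Rmult_le_compat_r; [left; apply Rinv_0_lt_compat, INR_fact_lt_0 |].
assert (0 <= ln y) by (rewrite <- ln_1; apply ln_le_compat; lra).
assert (ln y <= ln z) by (apply ln_le_compat; lra).
assert (0 <= INR k) by apply pos_INR.
apply Rmult_le_compat; try lra.
- apply pow_le; lra.
- apply pow_incr; lra.
Qed.

Lemma ln_succ_sub_ge x : 0 < x -> / (x + 1) <= ln (x + 1) - ln x.
Proof.
intros Hx.
pose proof (exp_ineq1_le (ln x - ln (x + 1))) as H.
unfold Rminus in H; rewrite exp_plus, exp_Ropp, !exp_ln in H by lra.
replace (/ (x + 1)) with (1 - x * / (x + 1)) by (field; lra).
lra.
Qed.

Lemma tuple_bound_le_antider_step k M n : 1 <= INR n -> INR (S n) <= M ->
  tuple_bound k (M / INR (S n)) <=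
    tuple_bound_antider k M (INR n) - tuple_bound_antider k M (INR (S n)).
Proof.
intros Hn HM; rewrite S_INR in *.
set (u := ln M - ln (INR n + 1) + INR k).
set (v := ln M - ln (INR n) + INR k).
assert (Hk : 0 <= INR k) by apply pos_INR.
assert (Hu : 0 <= u).
{ assert (ln (INR n + 1) <= ln M) by (apply ln_le_compat; lra).
  unfold u; lra. }
assert (Hvu : / (INR n + 1) <= v - u)
  by (pose proof (ln_succ_sub_ge (INR n)); unfold u, v; lra).
assert (Hpow : INR (S k) * u ^ k * (v - u) <= v ^ S k - u ^ S k).
{ apply pow_sub_pow_ge; split; [exact Hu |].
  assert (0 < / (INR n + 1)) by (apply Rinv_0_lt_compat; lra); lra. }
assert (Hfact := INR_fact_lt_0 k).
assert (HSk : 0 < INR (S k)) by (apply lt_0_INR; lia).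
assert (Hc : 0 <= M / (INR (S k) * INR (fact k)))
  by (apply Rmult_le_pos; [lra | left; apply Rinv_0_lt_compat; nra]).
unfold tuple_bound_antider, tuple_bound; rewrite fact_simpl, mult_INR; fold u v.
replace (ln (M / (INR n + 1)) + INR k) with u
  by (unfold u, Rdiv; rewrite ln_mult, ln_Rinv; try lra; apply Rinv_0_lt_compat; lra).
replace (M / (INR n + 1) * u ^ k / INR (fact k))
  with (M / (INR (S k) * INR (fact k)) * (INR (S k) * u ^ k * / (INR n + 1))) by (field; lra).
replace (M * v ^ S k / (INR (S k) * INR (fact k)) - M * u ^ S k / (INR (S k) * INR (fact k)))
  with (M / (INR (S k) * INR (fact k)) * (v ^ S k - u ^ S k)) by (field; lra).
apply Rmult_le_compat_l; [exact Hc |].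
apply Rle_trans with (2 := Hpow), Rmult_le_compat_l; [| exact Hvu].
apply Rmult_le_pos; [lra | now apply pow_le].
Qed.

Lemma tuple_bound_antider_ge0 k M t : 1 <= M -> t <= M -> 0 < t ->
  0 <= tuple_bound_antider k M t.
Proof.
intros HM HtM Ht; unfold tuple_bound_antider.
assert (ln t <= ln M) by now apply ln_le_compat.
assert (0 <= INR k) by apply pos_INR.
apply Rmult_le_pos; [apply Rmult_le_pos; [lra | apply pow_le; lra] |].
left; apply Rinv_0_lt_compat, INR_fact_lt_0.
Qed.

Lemma tuple_bound_succ_ge k M : 1 <= M ->
  tuple_bound k M + tuple_bound_antider k M 1 - tuple_bound_antider k M M
    <= tuple_bound (S k) M.
Proof.
intros HM.
assert (HG := tuple_bound_antider_ge0 k M M HM (Rle_refl M) ltac:(lra)).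
set (u := ln M + INR k).
assert (Hu : 0 <= u).
{ assert (0 <= ln M) by (rewrite <- ln_1; apply ln_le_compat; lra).
  assert (0 <= INR k) by apply pos_INR.
  unfold u; lra. }
assert (Hbin := pow_add1_ge k u Hu).
assert (Hfact := INR_fact_lt_0 k).
assert (HSk : 0 < INR (S k)) by (apply lt_0_INR; lia).
assert (Hc : 0 <= M / (INR (S k) * INR (fact k)))
  by (apply Rmult_le_pos; [lra | left; apply Rinv_0_lt_compat; nra]).
enough (tuple_bound k M + tuple_bound_antider k M 1 <= tuple_bound (S k) M) by lra.
unfold tuple_bound_antider, tuple_bound; rewrite ln_1, S_INR, fact_simpl, mult_INR.
replace (ln M - 0 + INR k) with u by (unfold u; ring).
replace (ln M + (INR k + 1)) with (u + 1) by (unfold u; ring).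
fold u.
replace (M * u ^ k / INR (fact k) + M * u ^ S k / (INR (S k) * INR (fact k)))
  with (M / (INR (S k) * INR (fact k)) * (u ^ S k + INR (S k) * u ^ k)) by (field; lra).
replace (M * (u + 1) ^ S k / (INR (S k) * INR (fact k)))
  with (M / (INR (S k) * INR (fact k)) * (u + 1) ^ S k) by (field; lra).
now apply Rmult_le_compat_l.
Qed.

Lemma sum_tuple_bound_le_antider k M n : INR (S n) <= M ->
  sum_f_R0 (fun i => tuple_bound k (M / INR (S i))) n
    <= tuple_bound k M + tuple_bound_antider k M 1 - tuple_bound_antider k M (INR (S n)).
Proof.
induction n as [|n IH]; intros HM.
- simpl; unfold Rdiv; rewrite Rinv_1, Rmult_1_r; lra.
- assert (1 <= INR (S n)) by (apply (le_INR 1); lia).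
  assert (INR (S n) <= INR (S (S n))) by (apply le_INR; lia).
  pose proof (tuple_bound_le_antider_step k M (S n) ltac:(lra) HM).
  rewrite tech5; specialize (IH ltac:(lra)); lra.
Qed.

Lemma sum_tuple_bound_le k M : (1 <= M)%nat ->
  sum_f_R0 (fun i => tuple_bound k (INR M / INR (S i))) (pred M)
    <= tuple_bound (S k) (INR M).
Proof.
intros HM.
assert (HSM : S (pred M) = M) by lia.
assert (1 <= INR M) by (apply (le_INR 1); lia).
apply Rle_trans with (2 := tuple_bound_succ_ge k (INR M) ltac:(lra)).
pose proof (sum_tuple_bound_le_antider k (INR M) (pred M)) as Hsum.
rewrite HSM in Hsum; apply Hsum, Rle_refl.
Qed.

Lemma tuple_bound_le_pow c k N : 0 < c -> 1 <= N -> INR k <= c * ln N ->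
  tuple_bound k N <= (1 + c) ^ k / INR (fact k) * N * ln N ^ k.
Proof.
intros Hc HN Hk.
assert (0 <= ln N) by (rewrite <- ln_1; apply ln_le_compat; lra).
assert (0 <= INR k) by apply pos_INR.
assert (Hfact := INR_fact_lt_0 k).
assert ((ln N + INR k) ^ k <= (1 + c) ^ k * ln N ^ k)
  by (rewrite <- Rpow_mult_distr; apply pow_incr; nra).
replace ((1 + c) ^ k / INR (fact k) * N * ln N ^ k)
  with (N * ((1 + c) ^ k * ln N ^ k) / INR (fact k)) by (field; lra).
unfold tuple_bound, Rdiv; apply Rmult_le_compat_r.
- left; now apply Rinv_0_lt_compat.
- apply Rmult_le_compat_l; lra.
Qed.

Module TupleCount.
Import all_boot zify.
Open Scope nat_scope.

(* Entries range over 'I_K for a fixed K > M, so that all the counts in the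
   recursion below live in the same type. *)
Definition nprod_le (r K M : nat) : nat :=
  #|[set f : {ffun 'I_r -> 'I_K} | 0 < \prod_(i < r) (f i : nat) <= M]|.

Section FfunCons.
Variables (T : finType) (r : nat).

Definition ffun_cons (p : T * {ffun 'I_r -> T}) : {ffun 'I_r.+1 -> T} :=
  [ffun i => if unlift ord0 i is Some j then p.2 j else p.1].

Definition ffun_uncons (f : {ffun 'I_r.+1 -> T}) : T * {ffun 'I_r -> T} :=
  (f ord0, [ffun j => f (lift ord0 j)]).

Lemma ffun_consK : cancel ffun_cons ffun_uncons.
Proof.
case=> x g; rewrite /ffun_uncons /ffun_cons /= ffunE unlift_none; congr pair.
by apply/ffunP => j; rewrite !ffunE liftK.
Qed.

Lemma ffun_unconsK : cancel ffun_uncons ffun_cons.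
Proof.
move=> f; apply/ffunP => i; rewrite /ffun_cons ffunE /=.
by case: unliftP => [j ->|->]; rewrite ?ffunE.
Qed.

Lemma prod_ffun_cons (F : T -> nat) x g :
  \prod_(i < r.+1) F (ffun_cons (x, g) i) = F x * \prod_(i < r) F (g i).
Proof.
rewrite big_ord_recl /ffun_cons ffunE unlift_none; congr muln.
by apply: eq_bigr => i _; rewrite ffunE liftK.
Qed.

End FfunCons.

Lemma nprod_le0 K M : nprod_le 0 K M = (0 < M).
Proof.
rewrite /nprod_le (eq_finset (fun=> 0 < M)); last by move=> f; rewrite big_ord0.
by case: (0 < M); rewrite ?cardsT ?cards0 // card_ffun !card_ord.
Qed.

Lemma nprod_le_rec r K M : M < K ->
  nprod_le r.+1 K M = \sum_(1 <= x < M.+1) nprod_le r K (M %/ x).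
Proof.
move=> ltMK.
pose C x := \sum_(g : {ffun 'I_r -> 'I_K} | 0 < x * \prod_(i < r) (g i : nat) <= M) 1.
have -> : nprod_le r.+1 K M = \sum_(0 <= x < K) C x.
  rewrite big_mkord /nprod_le -sum1dep_card (reindex (@ffun_cons _ r)) /=; last first.
    by exists (@ffun_uncons _ r) => f _; rewrite ?ffun_consK ?ffun_unconsK.
  by rewrite pair_big_dep; apply: eq_bigl => -[x g]; rewrite prod_ffun_cons.
rewrite (big_cat_nat (n := M.+1)) //= [X in _ + X]big1_seq ?addn0; last first.
  move=> x /andP[_]; rewrite mem_index_iota => /andP[ltMx _].
  apply: big_pred0 => g; apply/negbTE.
  case: (\prod_(i < r) _) => [|p]; first by rewrite muln0.
  by have := leq_pmulr x (ltn0Sn p); lia.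
rewrite big_ltn // [C 0]big_pred0 ?add0n => [|g]; last by rewrite mul0n.
apply: eq_big_nat => x /andP[x_gt0 _]; rewrite /nprod_le -sum1dep_card.
by apply: eq_bigl => g; rewrite muln_gt0 x_gt0 leq_divRL // mulnC.
Qed.

Lemma card_set_sum (T : finType) (P : pred T) : #|[set x | P x]| = \sum_x P x.
Proof. by rewrite -sum1dep_card big_mkcond; apply: eq_bigr => x _; case: (P x). Qed.

Lemma sum_index_iota_eq p m n : \sum_(m <= a < n) (p == a) = (m <= p < n).
Proof.
rewrite -mem_index_iota -(count_uniq_mem _ (iota_uniq _ _)) -sum1_count [RHS]big_mkcond /=.
by apply: eq_bigr => a _; rewrite eq_sym; case: (a == p).
Qed.

Lemma tau_le_widen r a N : a <= N ->
  tau r a <= #|[set f : {ffun 'I_r -> 'I_N.+1} | \prod_(i < r) (f i : nat) == a]|.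
Proof.
move=> leaN.
pose w (f : {ffun 'I_r -> 'I_a.+1}) := [ffun i => widen_ord (leaN : a.+1 <= N.+1) (f i)].
have w_inj : injective w.
  move=> f g /ffunP eq_fg; apply/ffunP => i.
  by move: (eq_fg i); rewrite /w !ffunE => /(congr1 val) /= /val_inj.
rewrite /tau -(card_imset _ w_inj); apply/subset_leq_card/subsetP.
move=> g /imsetP[f]; rewrite !inE => prod_f ->.
by under eq_bigr do rewrite ffunE.
Qed.

Lemma sum_tau_le_nprod r N : sum_tau r N <= nprod_le r N.+1 N.
Proof.
apply: (@leq_trans (\sum_(1 <= a < N.+1)
    #|[set f : {ffun 'I_r -> 'I_N.+1} | \prod_(i < r) (f i : nat) == a]|)).
  rewrite /sum_tau big_nat_cond [X in _ <= X]big_nat_cond.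
  by apply: leq_sum => a /andP[/andP[_ leaN] _]; apply: tau_le_widen.
rewrite /nprod_le card_set_sum; under eq_bigr do rewrite card_set_sum.
by rewrite exchange_big; apply: eq_leq; apply: eq_bigr => f _; rewrite sum_index_iota_eq.
Qed.

Open Scope R_scope.

Lemma INR_sum_index_iota (a : nat -> nat) n :
  INR (\sum_(1 <= x < n.+2) a x) = sum_f_R0 (fun i => INR (a i.+1)) n.
Proof.
elim: n => [|n IH]; first by rewrite big_nat1.
by rewrite big_nat_recr //= -IH -plusE plus_INR.
Qed.

Lemma INR_divn_le M x : (0 < x)%N -> INR (M %/ x) <= INR M / INR x.
Proof.
move=> x_gt0; have INRx_gt0 : 0 < INR x by apply/lt_0_INR/ltP.
apply: (Rmult_le_reg_r (INR x)) => //; rewrite /Rdiv Rmult_assoc Rinv_l; last lra.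
by rewrite Rmult_1_r -mult_INR; apply/le_INR/leP; rewrite multE leq_divM.
Qed.

Lemma nprod_le_bound k K M : (0 < M < K)%N ->
  INR (nprod_le k.+1 K M) <= tuple_bound k (INR M).
Proof.
elim: k M => [|k IH] M /andP[M_gt0 ltMK]; rewrite nprod_le_rec //.
  rewrite (eq_big_nat _ _ (F2 := fun=> 1%N)); last first.
    by move=> x /andP[x_gt0 leMx]; rewrite nprod_le0 divn_gt0 // -ltnS leMx.
  rewrite sum_nat_const_nat muln1 subn1 /tuple_bound /= Rmult_1_r /Rdiv Rinv_1; lra.
case: M M_gt0 ltMK => [//|m] _ ltMK; rewrite INR_sum_index_iota.
apply: (Rle_trans _ _ _ _ (sum_tuple_bound_le k m.+1 (le_n_S _ _ (le_0_n m)))).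
apply: sum_Rle => i /leP le_im.
have q_gt0 : (0 < m.+1 %/ i.+1)%N by rewrite divn_gt0.
have q_lt : (m.+1 %/ i.+1 < K)%N := leq_ltn_trans (leq_div _ _) ltMK.
apply: (Rle_trans _ _ _ (IH _ _)); first by rewrite q_gt0.
apply: tuple_bound_le; last exact: INR_divn_le.
by apply: (le_INR 1); apply/leP.
Qed.

Lemma sum_tau_le_tuple_bound k N : (1 <= N)%coq_nat ->
  INR (sum_tau k.+1 N) <= tuple_bound k (INR N).
Proof.
move=> /leP N_gt0; apply: (Rle_trans _ (INR (nprod_le k.+1 N.+1 N))).
  exact/le_INR/leP/sum_tau_le_nprod.
by apply: nprod_le_bound; rewrite N_gt0 ltnSn.
Qed.

End TupleCount.

Theorem corollary2p1 (c : R) (r N : nat) :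
  0 < c -> (1 <= r)%nat -> (1 <= N)%nat ->
  INR (r - 1) <= c * ln (INR N) ->
  INR (sum_tau r N) <=
    (1 + c) ^ (r - 1) / INR (fact (r - 1)) * INR N * (ln (INR N)) ^ (r - 1).
Proof.
intros Hc Hr HN Hk.
destruct r as [|k]; [lia |].
replace (S k - 1)%nat with k in * by lia.
apply Rle_trans with (tuple_bound k (INR N)).
- now apply TupleCount.sum_tau_le_tuple_bound.
- apply tuple_bound_le_pow; [exact Hc | apply (le_INR 1); exact HN | exact Hk].
Qed.
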